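(* Let $A,B,B'$ be clusterings of $\{1,\dots,n\}$ with $1<k_A<n$, and let $B'$ be an $A$-consistent improvement of $B$. Then $\mathrm{NMI}(A,B')>\mathrm{NMI}(A,B)$ and $\mathrm{VI}(A,B')<\mathrm{VI}(A,B)$.
   Context: For a clustering $A=\{A_1,\dots,A_{k_A}\}$ of $\{1,\dots,n\}$, $H(A)=-\sum_i\frac{|A_i|}n\log\frac{|A_i|}n$; the joint entropy $H(A,B)$ is the Shannon entropy of the distribution $(p_{ij})$ with $p_{ij}=|A_i\cap B_j|/n$; the mutual information is $M(A,B)=H(A)+H(B)-H(A,B)$. $\mathrm{NMI}(A,B)=\frac{M(A,B)}{(H(A)+H(B))/2}$ and $\mathrm{VI}(A,B)=2H(A,B)-H(A)-H(B)$. A pair of distinct elements agrees in $A$ and $B$ if it lies in a common cluster in both or in neither; $B'$ is an $A$-consistent improvement of $B$ if $B'\neq B$ and every pair agreeing in $A$ and $B$ also agrees in $A$ and $B'$. *)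

From mathcomp Require Import all_boot.
From Stdlib Require Import Reals.
Set Implicit Arguments. Unset Strict Implicit. Unset Printing Implicit Defensive.

(* A clustering of {1..n} (encoded as 'I_n = {0..n-1}) is a set of
   nonempty, pairwise disjoint clusters covering everything:
   mathcomp's [partition P [set: 'I_n]]. *)
Definition clustering (n : nat) (P : {set {set 'I_n}}) : bool :=
  partition P [set: 'I_n].

Definition xlnx (x : R) : R := if Rle_dec x 0 then 0%R else (x * ln x)%R.

Definition frac (n : nat) (k : nat) : R := (INR k / INR n)%R.

Definition entropy (n : nat) (A : {set {set 'I_n}}) : R :=
  (- \big[Rplus/0%R]_(C in A) xlnx (frac n #|C|))%R.

Definition joint_entropy (n : nat) (A B : {set {set 'I_n}}) : R :=
  (- \big[Rplus/0%R]_(C in A) \big[Rplus/0%R]_(D in B)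
        xlnx (frac n #|C :&: D|))%R.

Definition mutual_info (n : nat) (A B : {set {set 'I_n}}) : R :=
  (entropy A + entropy B - joint_entropy A B)%R.

Definition NMI (n : nat) (A B : {set {set 'I_n}}) : R :=
  (mutual_info A B / ((entropy A + entropy B) / 2))%R.

Definition VI (n : nat) (A B : {set {set 'I_n}}) : R :=
  (2 * joint_entropy A B - entropy A - entropy B)%R.

Definition same_cluster (n : nat) (P : {set {set 'I_n}}) (x y : 'I_n) : bool :=
  [exists C in P, (x \in C) && (y \in C)].

Definition agrees (n : nat) (A B : {set {set 'I_n}}) (x y : 'I_n) : Prop :=
  x <> y /\ same_cluster A x y = same_cluster B x y.

Definition consistent_improvement (n : nat) (A B B' : {set {set 'I_n}}) : Prop :=
  B' <> B /\ forall x y : 'I_n, agrees A B x y -> agrees A B' x y.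

From HB Require Import structures.
From mathcomp Require Import all_boot zify.
From Stdlib Require Import Reals Lra.

(* Averaging over points, H(P) = ln n - (1/n) sum_x ln |P x| and
   H(A,B) = ln n - (1/n) sum_x ln |A x :&: B x|, where P x is the cluster of x.
   An A-consistent improvement only moves B towards A: A x :&: B x is contained
   in B' x, and B' x lies inside A x or inside B x.  Hence, pointwise,
   |A x :&: B x| <= |A x :&: B' x| and
   |B' x| |A x :&: B x| <= |B x| |A x :&: B' x|,
   one of them strictly at some x when B' <> B.  Taking logarithms, H(A,B) and
   H(A|B) do not increase and 2 H(A,B) - H(B) strictly decreases, which is the
   claim on VI.  Writing NMI(A,B) = 2 - 2 H(A,B) / (H(A) + H(B)), the claim on
   NMI follows from these monotonicities together with M(A,B) >= 0 (strict when
   some cluster of A misses a cluster of B), itself a consequence of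
   ln y >= 1 - 1/y. *)

Set Implicit Arguments. Unset Strict Implicit. Unset Printing Implicit Defensive.

HB.instance Definition _ := Monoid.isComLaw.Build R 0%R Rplus
  (fun x y z => esym (Rplus_assoc x y z)) Rplus_comm Rplus_0_l.

Local Open Scope R_scope.

Section RealSums.
Variable I : finType.
Implicit Types (P : pred I) (f g : I -> R).

Lemma sumR_le P f g : (forall i, P i -> f i <= g i) ->
  \big[Rplus/0]_(i | P i) f i <= \big[Rplus/0]_(i | P i) g i.
Proof. by move=> fg; apply: (big_ind2 Rle) => *; [lra | lra | exact: fg]. Qed.

Lemma sumR_lt P f g i0 : (forall i, P i -> f i <= g i) -> P i0 -> f i0 < g i0 ->
  \big[Rplus/0]_(i | P i) f i < \big[Rplus/0]_(i | P i) g i.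
Proof.
move=> fg Pi0 fg0; rewrite (bigD1 i0) // [X in _ < X](bigD1 i0) //=.
suff : \big[Rplus/0]_(i | P i && (i != i0)) f i <=
       \big[Rplus/0]_(i | P i && (i != i0)) g i by lra.
by apply: sumR_le => i /andP[Pi _]; exact: fg.
Qed.

Lemma sumR_const (A : {pred I}) c : \big[Rplus/0]_(i in A) c = INR #|A| * c.
Proof.
rewrite big_const; elim: #|A| => [|k IH]; first by rewrite /=; lra.
by rewrite S_INR /= IH; lra.
Qed.

Lemma sumR_mull P f c :
  \big[Rplus/0]_(i | P i) (c * f i) = c * \big[Rplus/0]_(i | P i) f i.
Proof. by apply: (big_rec2 (fun a b => a = c * b)) => [|i a b _ ->]; lra. Qed.

Lemma sumR_sub P f g :
  \big[Rplus/0]_(i | P i) (f i - g i) =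
  \big[Rplus/0]_(i | P i) f i - \big[Rplus/0]_(i | P i) g i.
Proof. by apply: (big_rec3 (fun a b c => a = b - c)) => [|i a b c _ ->]; lra. Qed.

End RealSums.

Lemma sumR_cst_ord n c : \big[Rplus/0]_(x : 'I_n) c = INR n * c.
Proof. by rewrite -[n in INR n]card_ord -sumR_const; apply: eq_bigl. Qed.

Definition sum_ln n (f : 'I_n -> nat) : R := \big[Rplus/0]_x ln (INR (f x)).

Lemma INR_gt0 k : (0 < k)%nat -> 0 < INR k.
Proof. by move=> /ltP; exact: lt_0_INR. Qed.

Lemma ln_INR_lt p q : (0 < p)%nat -> (p < q)%nat -> ln (INR p) < ln (INR q).
Proof. by move=> p_gt0 /ltP pq; apply: ln_increasing (lt_INR _ _ pq); exact: INR_gt0. Qed.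

Lemma ln_INR_le p q : (0 < p)%nat -> (p <= q)%nat -> ln (INR p) <= ln (INR q).
Proof.
move=> p_gt0; rewrite leq_eqVlt => /orP[/eqP -> | pq]; first lra.
exact/Rlt_le/ln_INR_lt.
Qed.

Lemma cross_mul_sq_lt (b b' k k' : nat) : (0 < b)%nat -> (0 < k)%nat -> (k <= k')%nat ->
  (b' * k <= b * k')%nat -> (b' * k < b * k')%nat \/ (k < k')%nat ->
  (b' * k * k < b * k' * k')%nat.
Proof. by move=> *; nia. Qed.

Section SumLn.
Variable n : nat.
Implicit Types f g : 'I_n -> nat.

Lemma sum_ln_le f g : (forall x, 0 < f x <= g x)%nat -> sum_ln f <= sum_ln g.
Proof. by move=> fg; apply: sumR_le => x _; case/andP: (fg x); exact: ln_INR_le. Qed.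

Lemma sum_ln_lt f g x0 : (forall x, 0 < f x <= g x)%nat -> (f x0 < g x0)%nat ->
  sum_ln f < sum_ln g.
Proof.
move=> fg fg0; apply: (sumR_lt _ _ (i0 := x0)) => // [x _|].
  by case/andP: (fg x); exact: ln_INR_le.
by case/andP: (fg x0) => f0 _; exact: ln_INR_lt.
Qed.

Lemma sum_lnM f g : (forall x, 0 < f x)%nat -> (forall x, 0 < g x)%nat ->
  sum_ln (fun x => f x * g x)%nat = sum_ln f + sum_ln g.
Proof.
move=> f_gt0 g_gt0; rewrite /sum_ln -big_split; apply: eq_bigr => x _.
by rewrite mult_INR ln_mult //; exact: INR_gt0.
Qed.

Lemma sum_ln_cst : sum_ln (fun _ : 'I_n => n) = INR n * ln (INR n).
Proof. exact: sumR_cst_ord. Qed.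

End SumLn.

Section ClusteringCells.
Variables (n : nat) (P : {set {set 'I_n}}).
Hypothesis hP : clustering P.

Let trivP : trivIset P. Proof. by case/and3P: hP. Qed.

Lemma pblock_self x : x \in pblock P x.
Proof. by case/and3P: hP => /eqP covP _ _; rewrite mem_pblock covP inE. Qed.

Lemma pblock_in x : pblock P x \in P.
Proof. by rewrite pblock_mem // -mem_pblock pblock_self. Qed.

Lemma pblock_of_mem C x : C \in P -> x \in C -> pblock P x = C.
Proof. exact: def_pblock trivP. Qed.

Lemma pblock_eq x y : y \in pblock P x -> pblock P y = pblock P x.
Proof. exact: same_pblock trivP. Qed.

Lemma mem_pblock_sym x y : (y \in pblock P x) = (x \in pblock P y).
Proof. by apply/idP/idP => /pblock_eq ->; exact: pblock_self. Qed.

Lemma same_clusterE x y : same_cluster P x y = (y \in pblock P x).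
Proof.
apply/existsP/idP => [[C /andP[PC /andP[xC yC]]] | yPx].
  by rewrite (pblock_of_mem PC xC).
by exists (pblock P x); rewrite pblock_in pblock_self.
Qed.

Lemma card_pblock_gt0 x : (0 < #|pblock P x|)%nat.
Proof. by apply/card_gt0P; exists x; exact: pblock_self. Qed.

Lemma exists_notin_pblock x : (1 < #|P|)%nat -> exists y, y \notin pblock P x.
Proof.
case/card_gt1P => C1 [C2 [PC1 PC2 C12]].
have [C PC CPx] : exists2 C, C \in P & C != pblock P x.
  case: (eqVneq C1 (pblock P x)) => [C1Px | ]; last by exists C1.
  by exists C2; rewrite // -C1Px eq_sym.
case/set0Pn: (partition_neq0 hP PC) => y yC; exists y.
by apply: contra CPx => /pblock_eq <-; rewrite (pblock_of_mem PC yC).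
Qed.

Lemma card_pblock_lt x : (1 < #|P|)%nat -> (#|pblock P x| < n)%nat.
Proof.
case/(exists_notin_pblock x) => y yPx.
rewrite -[X in (_ < X)%nat]card_ord -cardsT; apply: proper_card.
by rewrite properT; apply: contraNneq yPx => ->; rewrite inE.
Qed.

End ClusteringCells.

Lemma clustering_pblock_neq n (P Q : {set {set 'I_n}}) :
  clustering P -> clustering Q -> P <> Q -> exists x, pblock P x != pblock Q x.
Proof.
move=> hP hQ PQ; apply/existsP; apply: contra_notT PQ => /existsPn samePQ.
have sub : forall P1 Q1 : {set {set 'I_n}}, clustering P1 ->
    (forall x, pblock P1 x = pblock Q1 x) -> clustering Q1 -> P1 \subset Q1.
  move=> P1 Q1 hP1 PQ1 hQ1; apply/subsetP => C P1C.
  case/set0Pn: (partition_neq0 hP1 P1C) => x xC.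
  by rewrite -(pblock_of_mem hP1 P1C xC) PQ1 pblock_in.
have {}samePQ x : pblock P x = pblock Q x by apply/eqP; rewrite -[_ == _]negbK samePQ.
by apply/eqP; rewrite eqEsubset !sub.
Qed.

(* Stdlib's [ln] vanishes on nonpositive reals, so [x * ln x] already follows
   the convention 0 log 0 = 0. *)
Lemma xlnxE x : xlnx x = x * ln x.
Proof.
rewrite /xlnx; destruct (Rle_dec x 0) as [x_le0 | x_gt0] => //=.
by unfold ln; destruct (Rlt_dec 0 x); [exfalso; lra | ring].
Qed.

Section PartitionSums.
Variable n : nat.
Implicit Types (P A B : {set {set 'I_n}}) (E : {set 'I_n}).

Lemma sum_pblock_in P E (F : {set 'I_n} -> R) : clustering P ->
  \big[Rplus/0]_(x in E) F (pblock P x) =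
  \big[Rplus/0]_(C in P) (INR #|C :&: E| * F C).
Proof.
move=> hP; have -> : \big[Rplus/0]_(x in E) F (pblock P x) =
    \big[Rplus/0]_(x in [set: 'I_n] | x \in E) F (pblock P x).
  by apply: eq_bigl => x; rewrite inE.
rewrite (set_partition_big_cond _ hP); apply: eq_bigr => C PC.
rewrite -sumR_const; apply: eq_big => [x | x /andP[xC _]]; first by rewrite inE.
by rewrite (pblock_of_mem hP PC xC).
Qed.

Lemma sum_pblock P (F : {set 'I_n} -> R) : clustering P ->
  \big[Rplus/0]_x F (pblock P x) = \big[Rplus/0]_(C in P) (INR #|C| * F C).
Proof.
move=> hP; rewrite -(eq_bigl _ _ (in_set (fun _ => true))) sum_pblock_in //.
by apply: eq_bigr => C _; rewrite setIT.
Qed.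

Lemma sum_pblock2 A B (F : {set 'I_n} -> {set 'I_n} -> R) :
  clustering A -> clustering B ->
  \big[Rplus/0]_x F (pblock A x) (pblock B x) =
  \big[Rplus/0]_(C in A) \big[Rplus/0]_(D in B) (INR #|C :&: D| * F C D).
Proof.
move=> hA hB; rewrite -(eq_bigl _ _ (in_set (fun _ => true))).
rewrite (set_partition_big _ hA); apply: eq_bigr => C AC.
rewrite (eq_bigr (fun x => F C (pblock B x))); last first.
  by move=> x xC; rewrite (pblock_of_mem hA AC xC).
by rewrite (sum_pblock_in _ (F C) hB); apply: eq_bigr => D _; rewrite setIC.
Qed.

End PartitionSums.

Lemma card_pblockI_gt0 n (A B : {set {set 'I_n}}) x : clustering A -> clustering B ->
  (0 < #|pblock A x :&: pblock B x|)%nat.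
Proof. by move=> hA hB; apply/card_gt0P; exists x; rewrite inE !pblock_self. Qed.

Lemma ln_ge_1_sub_inv y : 0 < y -> 1 - / y <= ln y.
Proof.
move=> y_gt0; have := exp_ineq1_le (ln (/ y)).
rewrite exp_ln; last exact: Rinv_0_lt_compat.
by rewrite ln_Rinv //; lra.
Qed.

Lemma mul_div_le k c : 0 <= c -> INR k * (c / INR k) <= c.
Proof.
case: k => [|k] c_ge0; first by rewrite /=; lra.
by rewrite /Rdiv Rmult_comm Rmult_assoc Rinv_l; [lra | exact/Rgt_not_eq/INR_gt0].
Qed.

Lemma ln_ratio_ge a b k N : 0 < a -> 0 < b -> 0 < k -> 0 < N ->
  1 - / N * (a * b / k) <= ln N + ln k - ln a - ln b.
Proof.
move=> a_gt0 b_gt0 k_gt0 N_gt0.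
have ab_gt0 : 0 < a * b by apply: Rmult_lt_0_compat.
have Nk_gt0 : 0 < N * k by apply: Rmult_lt_0_compat.
have := ln_ge_1_sub_inv (Rdiv_lt_0_compat _ _ Nk_gt0 ab_gt0).
have -> : / (N * k / (a * b)) = / N * (a * b / k).
  by field; repeat split; apply: Rgt_not_eq.
rewrite /Rdiv ln_mult ?ln_Rinv ?ln_mult //; [lra | exact: Rinv_0_lt_compat].
Qed.

Definition cond_entropy n (A B : {set {set 'I_n}}) : R :=
  joint_entropy A B - entropy B.

(* Read [hA + hB - j] as the mutual information M(A,B) and [j - hB] as H(A|B);
   the cross-multiplied inequality is j * (drop of H(A|.)) + (drop of H(A,.)) * M(A,B) > 0. *)
Lemma nmi_lt_of_entropy_bounds hA hB hB' j j' :
  0 < hA -> 0 <= hB -> 0 <= hB' -> hA <= j -> j' <= j -> 0 <= hA + hB - j ->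
  j' - hB' <= j - hB -> j' - hB' < j - hB \/ j' < j /\ 0 < hA + hB - j ->
  (hA + hB - j) / ((hA + hB) / 2) < (hA + hB' - j') / ((hA + hB') / 2).
Proof.
move=> hA_gt0 hB_ge0 hB'_ge0 hA_j j'_j M_ge0 c_ge0 strict.
have cross : j' * (hA + hB) < j * (hA + hB').
  have -> : j * (hA + hB') = j' * (hA + hB) +
      (j * ((j - hB) - (j' - hB')) + (j - j') * (hA + hB - j)) by ring.
  suff : 0 < j * ((j - hB) - (j' - hB')) + (j - j') * (hA + hB - j) by lra.
  case: strict => [c_gt0 | [j'_lt M_gt0]].
    by apply: Rplus_lt_le_0_compat; [apply: Rmult_lt_0_compat | apply: Rmult_le_pos]; lra.
  by apply: Rplus_le_lt_0_compat; [apply: Rmult_le_pos | apply: Rmult_lt_0_compat]; lra.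
apply: (Rmult_lt_reg_r ((hA + hB) * (hA + hB') / 2)); first nra.
rewrite /Rdiv.
have -> : (hA + hB - j) * / ((hA + hB) * / 2) * ((hA + hB) * (hA + hB') * / 2) =
          (hA + hB - j) * (hA + hB') by field; lra.
have -> : (hA + hB' - j') * / ((hA + hB') * / 2) * ((hA + hB) * (hA + hB') * / 2) =
          (hA + hB' - j') * (hA + hB) by field; lra.
nra.
Qed.

Section EntropyAsAverage.
Variable n : nat.
Hypothesis n_gt0 : (0 < n)%nat.
Implicit Types (P A B : {set {set 'I_n}}).

Let n_pos : 0 < INR n. Proof. exact: INR_gt0. Qed.

Let avg_le S T : S <= T -> / INR n * S <= / INR n * T.
Proof. by apply: Rmult_le_compat_l; apply: Rlt_le; apply: Rinv_0_lt_compat. Qed.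

Let avg_lt S T : S < T -> / INR n * S < / INR n * T.
Proof. by apply: Rmult_lt_compat_l; apply: Rinv_0_lt_compat. Qed.

Let avg_cst c : / INR n * (INR n * c) = c.
Proof. by field; lra. Qed.

Lemma sum_ln_frac (f : 'I_n -> nat) : (forall x, 0 < f x)%nat ->
  \big[Rplus/0]_x ln (frac n (f x)) = sum_ln f - INR n * ln (INR n).
Proof.
move=> f_gt0; rewrite -sum_ln_cst /sum_ln -sumR_sub; apply: eq_bigr => x _.
by rewrite /frac /Rdiv ln_mult ?ln_Rinv //; [exact: INR_gt0 | exact: Rinv_0_lt_compat].
Qed.

Lemma xlnx_frac k : xlnx (frac n k) = INR k * (/ INR n * ln (frac n k)).
Proof. by rewrite xlnxE /frac /Rdiv; ring. Qed.

Lemma entropyE P : clustering P ->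
  entropy P = ln (INR n) - / INR n * sum_ln (fun x => #|pblock P x|).
Proof.
move=> hP; rewrite /entropy; under eq_bigr => C _ do rewrite xlnx_frac.
rewrite -(sum_pblock (fun C => / INR n * ln (frac n #|C|)) hP) sumR_mull.
rewrite sum_ln_frac; last exact: card_pblock_gt0.
by set S := sum_ln _; field; lra.
Qed.

Lemma joint_entropyE A B : clustering A -> clustering B ->
  joint_entropy A B =
  ln (INR n) - / INR n * sum_ln (fun x => #|pblock A x :&: pblock B x|).
Proof.
move=> hA hB; rewrite /joint_entropy.
under eq_bigr => C _ do under eq_bigr => D _ do rewrite xlnx_frac.
rewrite -(sum_pblock2 (fun C D => / INR n * ln (frac n #|C :&: D|)) hA hB) sumR_mull.
rewrite sum_ln_frac => [|x]; last exact: card_pblockI_gt0.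
by set S := sum_ln _; field; lra.
Qed.

Lemma sum_card_cells P : clustering P -> \big[Rplus/0]_(C in P) INR #|C| = INR n.
Proof.
move=> hP; have := sum_pblock (fun _ => 1) hP; rewrite sumR_cst_ord Rmult_1_r => ->.
by apply: eq_bigr => C _; rewrite Rmult_1_r.
Qed.

Lemma sum_card_pairs A B : clustering A -> clustering B ->
  \big[Rplus/0]_(C in A) \big[Rplus/0]_(D in B) (INR #|C| * INR #|D|) = INR n * INR n.
Proof.
move=> hA hB; rewrite -{1}(sum_card_cells hA) Rmult_comm -sumR_mull.
by apply: eq_bigr => C _; rewrite sumR_mull sum_card_cells // Rmult_comm.
Qed.

(* Grouped by pairs of clusters, the sum counts |C| |D| for every intersecting
   pair (C, D). *)
Lemma sum_card_ratio_le A B : clustering A -> clustering B ->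
  \big[Rplus/0]_x (INR #|pblock A x| * INR #|pblock B x| /
                   INR #|pblock A x :&: pblock B x|) <= INR n * INR n.
Proof.
move=> hA hB; rewrite (sum_pblock2 (fun C D => INR #|C| * INR #|D| / INR #|C :&: D|)) //.
rewrite -(sum_card_pairs hA hB); apply: sumR_le => C _; apply: sumR_le => D _.
by apply: mul_div_le; apply: Rmult_le_pos; apply: pos_INR.
Qed.

Lemma sum_card_ratio_lt A B C0 D0 : clustering A -> clustering B ->
  C0 \in A -> D0 \in B -> C0 :&: D0 = set0 ->
  \big[Rplus/0]_x (INR #|pblock A x| * INR #|pblock B x| /
                   INR #|pblock A x :&: pblock B x|) < INR n * INR n.
Proof.
move=> hA hB AC0 BD0 CD0.
rewrite (sum_pblock2 (fun C D => INR #|C| * INR #|D| / INR #|C :&: D|)) //.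
have cell_ge0 C D : 0 <= INR #|C| * INR #|D| by apply: Rmult_le_pos; apply: pos_INR.
rewrite -(sum_card_pairs hA hB); apply: (sumR_lt _ _ (i0 := C0)) => // [C _|].
  by apply: sumR_le => D _; exact: mul_div_le.
apply: (sumR_lt _ _ (i0 := D0)) => // [D _|]; first exact: mul_div_le.
have card_gt0 E (P : {set {set 'I_n}}) : clustering P -> E \in P -> 0 < INR #|E|.
  by move=> hP PE; apply: INR_gt0; rewrite card_gt0; exact: partition_neq0 hP PE.
rewrite CD0 cards0 Rmult_0_l.
by apply: Rmult_lt_0_compat; [exact: card_gt0 hA AC0 | exact: card_gt0 hB BD0].
Qed.

Lemma entropy_ge0 P : clustering P -> 0 <= entropy P.
Proof.
move=> hP; rewrite entropyE //.
have : sum_ln (fun x => #|pblock P x|) <= sum_ln (fun _ : 'I_n => n).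
  apply: sum_ln_le => x; rewrite card_pblock_gt0 //=.
  by rewrite -[X in (_ <= X)%nat]card_ord max_card.
by rewrite sum_ln_cst => /avg_le; rewrite avg_cst; lra.
Qed.

Lemma entropy_gt0 P : clustering P -> (1 < #|P|)%nat -> 0 < entropy P.
Proof.
move=> hP P_gt1; rewrite entropyE //.
have : sum_ln (fun x => #|pblock P x|) < sum_ln (fun _ : 'I_n => n).
  apply: (sum_ln_lt (x0 := Ordinal n_gt0)) => [x|]; last exact: card_pblock_lt.
  by rewrite card_pblock_gt0 // ltnW // card_pblock_lt.
by rewrite sum_ln_cst => /avg_lt; rewrite avg_cst; lra.
Qed.

Lemma entropy_le_joint A B : clustering A -> clustering B ->
  entropy A <= joint_entropy A B.
Proof.
move=> hA hB; rewrite entropyE // joint_entropyE //.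
suff /avg_le : sum_ln (fun x => #|pblock A x :&: pblock B x|) <=
               sum_ln (fun x => #|pblock A x|) by lra.
apply: sum_ln_le => x.
by rewrite card_pblockI_gt0 // subset_leq_card // subsetIl.
Qed.

(* Gibbs' inequality: ln y >= 1 - 1/y at y = n |A x :&: B x| / (|A x| |B x|). *)
Lemma mutual_info_lower_bound A B : clustering A -> clustering B ->
  INR n - / INR n * \big[Rplus/0]_x (INR #|pblock A x| * INR #|pblock B x| /
                                     INR #|pblock A x :&: pblock B x|)
  <= INR n * mutual_info A B.
Proof.
move=> hA hB; rewrite /mutual_info !entropyE // joint_entropyE //.
have := sumR_le (P := fun _ => true) (fun x _ => ln_ratio_ge
  (INR_gt0 (card_pblock_gt0 hA x)) (INR_gt0 (card_pblock_gt0 hB x))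
  (INR_gt0 (card_pblockI_gt0 x hA hB)) n_pos).
rewrite !sumR_sub big_split /= !sumR_cst_ord sumR_mull -!/(sum_ln _).
set SJ := sum_ln _; set SA := sum_ln _; set SB := sum_ln _.
set ratios := \big[Rplus/0]_x _.
rewrite Rmult_1_r => /Rle_trans; apply; apply: Req_le; field; lra.
Qed.

Lemma mutual_info_ge0 A B : clustering A -> clustering B -> 0 <= mutual_info A B.
Proof.
move=> hA hB; have := mutual_info_lower_bound hA hB.
have /avg_le := sum_card_ratio_le hA hB; rewrite -Rmult_assoc Rinv_l; last lra.
by nra.
Qed.

Lemma mutual_info_gt0 A B C D : clustering A -> clustering B ->
  C \in A -> D \in B -> C :&: D = set0 -> 0 < mutual_info A B.
Proof.
move=> hA hB AC BD CD; have := mutual_info_lower_bound hA hB.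
have /avg_lt := sum_card_ratio_lt hA hB AC BD CD; rewrite -Rmult_assoc Rinv_l; last lra.
by nra.
Qed.

Section ConsistentImprovement.
Variables A B B' : {set {set 'I_n}}.
Hypotheses (hA : clustering A) (hB : clustering B) (hB' : clustering B').
Hypothesis improves : forall x y, agrees A B x y -> agrees A B' x y.

Lemma improvement_agrees x y : x != y ->
  (y \in pblock A x) = (y \in pblock B x) -> (y \in pblock B' x) = (y \in pblock A x).
Proof.
move=> /eqP xy AB; have [_] : agrees A B' x y.
  by apply: improves; split; rewrite // (same_clusterE hA) (same_clusterE hB).
by rewrite (same_clusterE hA) (same_clusterE hB') => ->.
Qed.

Lemma pblockI_sub x : pblock A x :&: pblock B x \subset pblock B' x.
Proof.
apply/subsetP => y; rewrite inE => /andP[yA yB].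
have [<-|xy] := eqVneq x y; first exact: pblock_self.
by rewrite (improvement_agrees xy) // yA yB.
Qed.

Lemma pblock_subU x : pblock B' x \subset pblock A x :|: pblock B x.
Proof.
apply/subsetP => y yB'; rewrite inE; apply/negPn/negP; rewrite negb_or => /andP[yA yB].
have xy : x != y by apply: contraNneq yA => <-; exact: pblock_self.
by move: yB'; rewrite (improvement_agrees xy) (negbTE yA) ?(negbTE yB).
Qed.

(* Points y in B' x \ A x and z in B' x \ B x would be separated by both A and
   B, yet lie in one cluster of B'. *)
Lemma pblock_sub_or x :
  pblock B' x \subset pblock A x \/ pblock B' x \subset pblock B x.
Proof.
have [|/subsetPn[y yB' yA]] := boolP (pblock B' x \subset pblock A x); first by left.
have mem_AUB z w : w \in pblock B' z -> (w \in pblock A z) || (w \in pblock B z).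
  by move=> wB'; have := subsetP (pblock_subU z) w wB'; rewrite inE.
have yB : y \in pblock B x by move: (mem_AUB _ _ yB'); rewrite (negbTE yA).
right; apply/subsetP => z zB'; apply/negPn/negP => zB.
have zA : z \in pblock A x by move: (mem_AUB _ _ zB'); rewrite (negbTE zB) orbF.
have := mem_AUB z y; rewrite (pblock_eq hB' zB') yB' (pblock_eq hA zA) (negbTE yA).
by rewrite (mem_pblock_sym hB) (pblock_eq hB yB) (negbTE zB) => /(_ isT).
Qed.

Lemma card_pblockI_le x :
  (#|pblock A x :&: pblock B x| <= #|pblock A x :&: pblock B' x|)%nat.
Proof. by apply: subset_leq_card; rewrite subsetI subsetIl pblockI_sub. Qed.

Lemma card_pblock_cross_le x :
  (#|pblock B' x| * #|pblock A x :&: pblock B x| <=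
   #|pblock B x| * #|pblock A x :&: pblock B' x|)%nat.
Proof.
have kk' := card_pblockI_le x.
have kb : (#|pblock A x :&: pblock B x| <= #|pblock B x|)%nat.
  by apply: subset_leq_card; exact: subsetIr.
case: (pblock_sub_or x) => [/setIidPr -> | B'B].
  by rewrite [X in (_ <= X)%nat]mulnC leq_mul2l kb orbT.
have b'b : (#|pblock B' x| <= #|pblock B x|)%nat by exact: subset_leq_card.
by apply: leq_mul.
Qed.

Lemma card_pblock_cross_lt x : pblock B' x != pblock B x ->
  (#|pblock B' x| * #|pblock A x :&: pblock B x| <
   #|pblock B x| * #|pblock A x :&: pblock B' x|)%nat \/
  (#|pblock A x :&: pblock B x| < #|pblock A x :&: pblock B' x|)%nat /\
   pblock B x \subset pblock A x.
Proof.
move=> B'x_neq.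
have k_gt0 := card_pblockI_gt0 x hA hB; have kk' := card_pblockI_le x.
case: (pblock_sub_or x) => [B'A | B'B].
  rewrite (setIidPr B'A).
  have [kb | kb] := ltnP #|pblock A x :&: pblock B x| #|pblock B x|.
    by left; rewrite [X in (_ < X)%nat]mulnC ltn_pmul2l // card_pblock_gt0.
  have AB : pblock A x :&: pblock B x = pblock B x.
    by apply/eqP; rewrite eqEcard subsetIr kb.
  right; split; last by rewrite -AB subsetIl.
  rewrite AB; apply: proper_card; rewrite properEneq eq_sym B'x_neq /=.
  by rewrite -AB pblockI_sub.
left; have k'k : (#|pblock A x :&: pblock B' x| <= #|pblock A x :&: pblock B x|)%nat.
  by apply: subset_leq_card; apply: setIS.
have b'b : (#|pblock B' x| < #|pblock B x|)%nat.
  by apply: proper_card; rewrite properEneq B'x_neq.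
have -> : #|pblock A x :&: pblock B' x| = #|pblock A x :&: pblock B x|.
  by apply/eqP; rewrite eqn_leq k'k kk'.
by rewrite ltn_pmul2r.
Qed.

Let card_B_gt0 := card_pblock_gt0 hB.
Let card_B'_gt0 := card_pblock_gt0 hB'.
Let card_AB_gt0 x := card_pblockI_gt0 x hA hB.
Let card_AB'_gt0 x := card_pblockI_gt0 x hA hB'.

Let card_B'_AB_gt0 x : (0 < #|pblock B' x| * #|pblock A x :&: pblock B x|)%nat.
Proof. by rewrite muln_gt0 card_B'_gt0 card_AB_gt0. Qed.

Let card_B_AB'_gt0 x : (0 < #|pblock B x| * #|pblock A x :&: pblock B' x|)%nat.
Proof. by rewrite muln_gt0 card_B_gt0 card_AB'_gt0. Qed.

Lemma joint_entropy_improvement_le : joint_entropy A B' <= joint_entropy A B.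
Proof.
rewrite !joint_entropyE //.
suff /avg_le : sum_ln (fun x => #|pblock A x :&: pblock B x|) <=
               sum_ln (fun x => #|pblock A x :&: pblock B' x|) by lra.
by apply: sum_ln_le => x; rewrite card_AB_gt0 card_pblockI_le.
Qed.

Lemma cond_entropy_improvement_le : cond_entropy A B' <= cond_entropy A B.
Proof.
rewrite /cond_entropy !joint_entropyE // !entropyE //.
have : sum_ln (fun x => #|pblock B' x| * #|pblock A x :&: pblock B x|)%nat <=
       sum_ln (fun x => #|pblock B x| * #|pblock A x :&: pblock B' x|)%nat.
  by apply: sum_ln_le => x; rewrite card_B'_AB_gt0 card_pblock_cross_le.
by rewrite !sum_lnM // => /avg_le; rewrite !Rmult_plus_distr_l; lra.
Qed.

Lemma VI_improvement_lt : B' <> B -> VI A B' < VI A B.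
Proof.
move=> neB; have [x0 x0_neq] := clustering_pblock_neq hB' hB neB.
rewrite /VI !joint_entropyE // !entropyE //.
have : sum_ln (fun x =>
         #|pblock B' x| * #|pblock A x :&: pblock B x| * #|pblock A x :&: pblock B x|)%nat <
       sum_ln (fun x =>
         #|pblock B x| * #|pblock A x :&: pblock B' x| * #|pblock A x :&: pblock B' x|)%nat.
  apply: (sum_ln_lt (x0 := x0)) => [x|].
    rewrite muln_gt0 card_B'_AB_gt0 card_AB_gt0.
    by rewrite leq_mul ?card_pblock_cross_le ?card_pblockI_le.
  apply: cross_mul_sq_lt (card_B_gt0 x0) (card_AB_gt0 x0) (card_pblockI_le x0) _ _.
    exact: card_pblock_cross_le.
  by case: (card_pblock_cross_lt x0_neq) => [|[]]; [left | right].
by rewrite !sum_lnM // => /avg_lt; rewrite !Rmult_plus_distr_l; lra.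
Qed.

Lemma improvement_strict : B' <> B -> (1 < #|A|)%nat ->
  cond_entropy A B' < cond_entropy A B \/
  joint_entropy A B' < joint_entropy A B /\ 0 < mutual_info A B.
Proof.
move=> neB A_gt1; have [x0 x0_neq] := clustering_pblock_neq hB' hB neB.
case: (card_pblock_cross_lt x0_neq) => [cross_lt | [k_lt BA]]; [left | right].
  rewrite /cond_entropy !joint_entropyE // !entropyE //.
  have : sum_ln (fun x => #|pblock B' x| * #|pblock A x :&: pblock B x|)%nat <
         sum_ln (fun x => #|pblock B x| * #|pblock A x :&: pblock B' x|)%nat.
    by apply: (sum_ln_lt (x0 := x0)) => // x; rewrite card_B'_AB_gt0 card_pblock_cross_le.
  by rewrite !sum_lnM // => /avg_lt; rewrite !Rmult_plus_distr_l; lra.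
split.
  rewrite !joint_entropyE //.
  suff /avg_lt : sum_ln (fun x => #|pblock A x :&: pblock B x|) <
                 sum_ln (fun x => #|pblock A x :&: pblock B' x|) by lra.
  by apply: (sum_ln_lt (x0 := x0)) => // x; rewrite card_AB_gt0 card_pblockI_le.
have [y0 y0_notin] := exists_notin_pblock hA x0 A_gt1.
apply: (mutual_info_gt0 hA hB (pblock_in hA y0) (pblock_in hB x0)).
apply/setP => z; rewrite !inE; apply/negbTE/andP => -[zA zB].
move: y0_notin; rewrite -(pblock_eq hA (subsetP BA z zB)) (pblock_eq hA zA).
by rewrite pblock_self.
Qed.

End ConsistentImprovement.

End EntropyAsAverage.

Local Close Scope R_scope.

Theorem mainTheorem11 (n : nat) (A B B' : {set {set 'I_n}}) :
  clustering A -> clustering B -> clustering B' ->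
  (1 < #|A| < n)%N ->
  consistent_improvement A B B' ->
  (NMI A B' > NMI A B)%R /\ (VI A B' < VI A B)%R.
Proof.
move=> hA hB hB' /andP[A_gt1 A_lt_n] [neB improves].
have n_gt0 : (0 < n)%nat by lia. (* the only use of #|A| < n *)
split; last exact: (VI_improvement_lt n_gt0 hA hB hB' improves neB).
apply: nmi_lt_of_entropy_bounds.
- exact: (entropy_gt0 n_gt0 hA A_gt1).
- exact: (entropy_ge0 n_gt0 hB).
- exact: (entropy_ge0 n_gt0 hB').
- exact: (entropy_le_joint n_gt0 hA hB).
- exact: (joint_entropy_improvement_le n_gt0 hA hB hB' improves).
- exact: (mutual_info_ge0 n_gt0 hA hB).
- exact: (cond_entropy_improvement_le n_gt0 hA hB hB' improves).
- exact: (improvement_strict n_gt0 hA hB hB' improves neB A_gt1).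
Qed.
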